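(* Let $p,q\in\mathbb{R}[t_1,\dots,t_\ell]$ satisfy $p\succeq0$, $q\succeq0$ and $p\simeq q$. Then $p$ and $q$ have the same leading homogeneous component.
   Context: For $p\in\mathbb{R}[\bar t]$, $\bar t=(t_1,\dots,t_\ell)$, write $p=p_0+p_1+\dots+p_d$ with $p_i$ homogeneous of degree $i$ and $p_d\ne0$; $p_d$ is the leading homogeneous component of $p$. Write $p\preceq q$ if there is $\bar c\in\mathbb{N}^\ell$ such that $p(\bar n)\le q(\bar n+\bar c)$ for all $\bar n\in\mathbb{N}^\ell$ large enough; $p\simeq q$ if $p\preceq q$ and $q\preceq p$; and $p\succeq0$ if $p(\bar n)\ge0$ for all $\bar n\in\mathbb{N}^\ell$ large enough. (''Large enough'' means all coordinates of $\bar n$ are at least some bound.) *)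

From HB Require Import structures.
From mathcomp Require Import all_boot all_order all_algebra.
From mathcomp Require Import reals.
From mathcomp Require Import mpoly.
Set Implicit Arguments.
Unset Strict Implicit.
Unset Printing Implicit Defensive.
Import Order.TTheory GRing.Theory Num.Theory.
Local Open Scope ring_scope.

Definition evalN (R : realType) (l : nat) (p : {mpoly R[l]}) (n : 'I_l -> nat) : R :=
  p.@[fun i => (n i)%:R].

Definition eventuallyN (l : nat) (P : ('I_l -> nat) -> Prop) : Prop :=
  exists N : nat, forall n : 'I_l -> nat, (forall i, (N <= n i)%N) -> P n.

Definition poly_preceq (R : realType) (l : nat) (p q : {mpoly R[l]}) : Prop :=
  exists c : 'I_l -> nat,
    eventuallyN (fun n => evalN p n <= evalN q (fun i => (n i + c i)%N)).

Definition poly_simeq (R : realType) (l : nat) (p q : {mpoly R[l]}) : Prop :=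
  poly_preceq p q /\ poly_preceq q p.

Definition poly_nonneg (R : realType) (l : nat) (p : {mpoly R[l]}) : Prop :=
  eventuallyN (fun n => 0 <= evalN p n).

(* Leading homogeneous component: the homogeneous part of p of degree
   d = total degree of p (msize p = 1 + deg p, and 0 for p = 0; so the
   leading component of the zero polynomial is 0). *)
Definition lead_homog (R : realType) (l : nat) (p : {mpoly R[l]}) : {mpoly R[l]} :=
  pihomog mdeg (msize p).-1 p.

From mathcomp Require Import all_boot all_order all_algebra.
From mathcomp Require Import reals polyrcf mpoly.
Import Order.TTheory GRing.Theory Num.Theory.
Set Implicit Arguments.
Unset Strict Implicit.
Unset Printing Implicit Defensive.
Local Open Scope ring_scope.

(* Along the ray s |-> s x + c through a positive integer point x, a polynomial
   p becomes a univariate polynomial in s whose coefficient of s^K, for any K at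
   least deg p, is the degree-K homogeneous part of p evaluated at x.  If
   p(n) <= q(n + c) for all large n, then p(s x) <= q(s x + c) for all large s,
   so this coefficient for p is at most that for q.  Taking K the larger of the
   two degrees and using both p <= q and q <= p, the degree-K parts of p and q
   agree at all positive integer points, hence coincide; this forces
   deg p = deg q and equal leading components. *)

Section MultinomSplit.
Variable n : nat.

Definition mnm_init (m : 'X_{1..n.+1}) : 'X_{1..n} :=
  [multinom m (widen_ord (leqnSn n) i) | i < n].

Lemma widen_lift_max (i : 'I_n) : widen_ord (leqnSn n) i = lift ord_max i.
Proof. exact/val_inj/esym/lift_max. Qed.

Lemma mnm_split_eq (m m' : 'X_{1..n.+1}) :
  (m == m') = (mnm_init m == mnm_init m') && (m ord_max == m' ord_max).
Proof.
apply/eqP/andP => [-> //|[/eqP eq_init /eqP eq_max]].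
apply/mnmP => j; case: (unliftP ord_max j) => [i ->|-> //].
by have /mnmP/(_ i) := eq_init; rewrite !mnmE widen_lift_max.
Qed.

End MultinomSplit.

Section MpolyUnivariate.
Variables (R : comNzRingType) (n : nat).
Implicit Types (p : {mpoly R[n.+1]}).

Lemma mcoeff_muni p m : ((muni p)`_(m ord_max))@_(mnm_init m) = p@_m.
Proof.
rewrite muniE {3}[p]mpolyE coef_sum !raddf_sum /=; apply: eq_bigr => m' _.
rewrite coefZ coefXn mulr_natr mcoeffMn !mcoeffZ !mcoeffX -mulrnAr.
rewrite -mulr_natr -natrM mulnb -/(mnm_init m') [_ ord_max == _]eq_sym.
by rewrite -mnm_split_eq.
Qed.

Lemma muni_eq0 p : muni p = 0 -> p = 0.
Proof. by move=> p0; apply/mpolyP => m; rewrite -mcoeff_muni p0 coef0 !mcoeff0. Qed.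

Lemma meval_muni p (v : 'I_n.+1 -> R) :
  p.@[v] = (map_poly (meval (v \o widen_ord (leqnSn n))) (muni p)).[v ord_max].
Proof.
rewrite muniE mevalE raddf_sum horner_sum; apply: eq_bigr => m _.
rewrite /= map_polyZ map_polyXn hornerZ hornerXn /= mevalZ mevalX big_ord_recr /=.
by rewrite mulrA; congr (_ * _ * _); apply: eq_bigr => i _; rewrite mnmE.
Qed.

End MpolyUnivariate.

Lemma poly_eq0_nat (R : numDomainType) (Q : {poly R}) :
  (forall k, Q.[k.+1%:R] = 0) -> Q = 0.
Proof.
move=> Q0; apply: (@roots_geq_poly_eq0 _ _ [seq k.+1%:R | k <- iota 0 (size Q)]).
- by apply/allP => _ /mapP[k _ ->]; apply/rootP.
- by rewrite map_inj_uniq ?iota_uniq // => i j /eqP; rewrite eqr_nat => /eqP [].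
- by rewrite size_map size_iota.
Qed.

Lemma mpoly_eq0_nat (R : numDomainType) n (p : {mpoly R[n]}) :
  (forall x : 'I_n -> nat, (forall i, 0 < x i)%N -> p.@[fun i => (x i)%:R] = 0) ->
  p = 0.
Proof.
elim: n p => [|n IH] p p0.
  have := p0 (fun _ => 1%N) (fun _ => isT).
  by rewrite (nvar0_mpolyC_eq p) // mevalC => ->.
apply: muni_eq0; apply/polyP => k; rewrite coef0.
apply: IH => x x_gt0.
pose y s (j : 'I_n.+1) := if unlift ord_max j is Some i then x i else s.+1.
have y_gt0 s j : (0 < y s j)%N by rewrite /y; case: unlift.
suff /polyP/(_ k) : map_poly (meval (fun i => (x i)%:R)) (muni p) = 0.
  by rewrite coef_map coef0.
apply: poly_eq0_nat => s; rewrite -(p0 _ (y_gt0 s)) meval_muni /y unlift_none.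
congr (_.[_]); apply: eq_map_poly => q; apply: meval_eq => i /=.
by rewrite widen_lift_max liftK.
Qed.

Lemma lead_coef_ge0_eventually (R : archiRealFieldType) (A : {poly R}) N :
  (forall s, (N <= s)%N -> 0 <= A.[s%:R]) -> 0 <= lead_coef A.
Proof.
move=> A_ge0; rewrite leNgt; apply/negP => lcA_lt0.
have [y Ay] : exists y, forall z, y <= z -> lead_coef (- A) <= (- A).[z].
  by apply: poly_pinfty_gt_lc; rewrite lead_coefN oppr_gt0.
pose s := maxn N (Num.bound `|y|).
have y_le_s : y <= s%:R.
  apply: le_trans (ler_norm y) (ltW (lt_le_trans (archi_boundP (normr_ge0 y)) _)).
  by rewrite ler_nat leq_maxr.
have := Ay _ y_le_s; rewrite lead_coefN hornerN lerN2 => As_le.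
by have := A_ge0 s (leq_maxl _ _); rewrite leNgt (le_lt_trans As_le lcA_lt0).
Qed.

Lemma coef_ge0_eventually (R : archiRealFieldType) (A : {poly R}) N K :
  (size A <= K.+1)%N -> (forall s, (N <= s)%N -> 0 <= A.[s%:R]) -> 0 <= A`_K.
Proof.
move=> szA /lead_coef_ge0_eventually; rewrite lead_coefE.
have [-> // | sz_lt] := eqVneq (size A) K.+1.
by move=> _; rewrite nth_default // -ltnS ltn_neqAle sz_lt szA.
Qed.

Section LinePoly.
Variables (R : idomainType) (n : nat) (x c : 'I_n -> R).

Definition line_monomial (m : 'X_{1..n}) : {poly R} :=
  \prod_(i < n) ((x i)%:P * 'X + (c i)%:P) ^+ m i.

Definition line_poly (p : {mpoly R[n]}) : {poly R} :=
  \sum_(m <- msupp p) p@_m *: line_monomial m.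

Lemma horner_line_poly p s : (line_poly p).[s] = p.@[fun i => x i * s + c i].
Proof.
rewrite horner_sum mevalE; apply: eq_bigr => m _.
rewrite hornerZ horner_prod; congr (_ * _); apply: eq_bigr => i _.
by rewrite horner_exp hornerMXaddC !hornerC.
Qed.

Hypothesis x_neq0 : forall i, x i != 0.

Let size_factor i : size ((x i)%:P * 'X + (c i)%:P) = 2.
Proof. by rewrite size_MXaddC polyC_eq0 (negbTE (x_neq0 i)) size_polyC x_neq0. Qed.

Lemma size_line_monomial m : size (line_monomial m) = (mdeg m).+1.
Proof.
rewrite size_prod => [|i _]; last by rewrite expf_neq0 // -size_poly_eq0 size_factor.
under eq_bigr do rewrite my_size_exp -?size_poly_eq0 ?size_factor // mul1n -addn1.
by rewrite big_split sum1_card card_ord -mdegE -addSn addnK.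
Qed.

Lemma lead_coef_line_monomial m : lead_coef (line_monomial m) = 'X_[m].@[x].
Proof.
rewrite lead_coef_prod mevalX; apply: eq_bigr => i _.
by rewrite lead_coef_exp lead_coefE size_factor coefD coefMX coefC /= coefC addr0.
Qed.

Lemma size_line_poly p : (size (line_poly p) <= msize p)%N.
Proof.
apply: leq_trans (size_sum _ _ _) _; apply/bigmax_leqP_seq => m m_p _.
by apply: leq_trans (size_scale_leq _ _) _; rewrite size_line_monomial msize_mdeg_lt.
Qed.

Lemma coef_line_poly p k :
  (msize p <= k.+1)%N -> (line_poly p)`_k = (pihomog mdeg k p).@[x].
Proof.
move=> szp; rewrite coef_sum pihomogE raddf_sum /= [RHS]big_mkcond /=.
apply: eq_big_seq => m m_p; rewrite coefZ.
have : (mdeg m < k.+1)%N := leq_trans (msize_mdeg_lt m_p) szp.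
rewrite ltnS leq_eqVlt => /orP[/eqP <- | deg_lt].
  by rewrite eqxx mevalZ -lead_coef_line_monomial lead_coefE size_line_monomial.
by rewrite (ltn_eqF deg_lt) nth_default ?mulr0 // size_line_monomial.
Qed.

End LinePoly.

Section LeadingHomogeneousPart.
Variables (R : nzRingType) (n : nat).
Implicit Types (p q : {mpoly R[n]}).

Lemma mcoeff_pihomog d p m :
  (pihomog mdeg d p)@_m = if mdeg m == d then p@_m else 0.
Proof.
rewrite pihomogE raddf_sum /=; have [<- | ne] := eqVneq (mdeg m) d.
  rewrite {3}[p]mpolyE raddf_sum /= [RHS](bigID (fun m' => mdeg m' == mdeg m)) /=.
  rewrite [X in _ + X]big1 ?addr0 // => m' ne'.
  rewrite mcoeffZ mcoeffX.
  by case: eqP => [eq_m|_]; [rewrite eq_m eqxx in ne' | rewrite mulr0].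
rewrite big1 // => m' /eqP dm'; rewrite mcoeffZ mcoeffX.
by case: eqP => [eq_m|_]; [rewrite -eq_m dm' eqxx in ne | rewrite mulr0].
Qed.

Lemma pihomog_msize_le d p : (msize p <= d)%N -> pihomog mdeg d p = 0.
Proof.
move=> szp; rewrite pihomogE big1_seq // => m /andP[/eqP dm /msize_mdeg_lt].
by rewrite dm ltnNge szp.
Qed.

Lemma pihomog_msize_eq0 p : (pihomog mdeg (msize p).-1 p == 0) = (p == 0).
Proof.
apply/eqP/eqP => [top0 | ->]; last exact: raddf0.
apply/eqP; rewrite -mleadc_eq0; apply/eqP.
have [-> | p_neq0] := eqVneq p 0; first by rewrite mcoeff0.
have := congr1 (mcoeff (mlead p)) top0.
by rewrite mcoeff_pihomog mcoeff0 -(mlead_deg p_neq0) eqxx.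
Qed.

End LeadingHomogeneousPart.

Lemma lead_homog_eq_top (R : realType) l (p q : {mpoly R[l]}) :
  let K := (maxn (msize p) (msize q)).-1 in
  pihomog mdeg K p = pihomog mdeg K q -> lead_homog p = lead_homog q.
Proof.
wlog pq : p q / (msize p <= msize q)%N => [wlog_pq | /=].
  case/orP: (leq_total (msize p) (msize q)) => [|qp /= E]; first exact: wlog_pq.
  by symmetry; apply: wlog_pq => //=; rewrite maxnC E.
rewrite /lead_homog (maxn_idPr pq).
have [-> // | neq_sz E] := eqVneq (msize p) (msize q).
have lt_sz : (msize p < msize q)%N by rewrite ltn_neqAle neq_sz.
have q0 : q = 0.
  apply/eqP; rewrite -pihomog_msize_eq0 -E pihomog_msize_le //.
  by rewrite -ltnS prednK // (leq_ltn_trans _ lt_sz).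
by rewrite q0 msize0 in lt_sz.
Qed.

Lemma pihomog_le_of_preceq (R : realType) l (p q : {mpoly R[l]}) K :
  poly_preceq p q -> (msize p <= K.+1)%N -> (msize q <= K.+1)%N ->
  forall x : 'I_l -> nat, (forall i, 0 < x i)%N ->
  (pihomog mdeg K p).@[fun i => (x i)%:R] <= (pihomog mdeg K q).@[fun i => (x i)%:R].
Proof.
move=> [c [N le_pq]] szp szq x x_gt0.
have x_neq0 i : (x i)%:R != 0 :> R by rewrite pnatr_eq0 -lt0n x_gt0.
rewrite -subr_ge0 -(coef_line_poly (fun i => (c i)%:R) x_neq0 szq).
rewrite -(coef_line_poly (fun => 0) x_neq0 szp) -coefB.
apply: (@coef_ge0_eventually _ _ N).
  apply: leq_trans (size_polyD _ _) _; rewrite size_polyN geq_max.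
  by rewrite !(leq_trans (size_line_poly _ _ _)).
move=> s Ns; rewrite hornerD hornerN !horner_line_poly subr_ge0.
have := le_pq (fun i => x i * s)%N (fun i => leq_trans Ns (leq_pmull _ (x_gt0 i))).
by rewrite /evalN; congr (_ <= _); apply: meval_eq => i; rewrite ?natrD natrM ?addr0.
Qed.

Theorem proposition4p7 (R : realType) (l : nat) (p q : {mpoly R[l]}) :
  poly_nonneg p -> poly_nonneg q -> poly_simeq p q ->
  lead_homog p = lead_homog q.
Proof.
move=> _ _ [le_pq le_qp]; apply: lead_homog_eq_top.
set K := (maxn _ _).-1.
have /andP[szp szq] : (msize p <= K.+1)%N && (msize q <= K.+1)%N.
  by rewrite -geq_max leqSpred.
apply/eqP; rewrite -subr_eq0; apply/eqP/mpoly_eq0_nat => x x_gt0.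
by rewrite mevalB; apply/eqP; rewrite subr_eq0 eq_le !pihomog_le_of_preceq.
Qed.
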